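(* Let $0\le k<\infty$, let $M$ be a $C^k$ manifold, $\mathbb F\in\{\mathbb R,\mathbb C\}$, and let $f,g\in C^k(M,\mathbb F)$ with $f(x)=g(x)=0$ for some $x\in M$. Then there exists $h\in C^k(M,\mathbb F)$ with $h(x)=0$ such that both $f^{4k+4}$ and $g^{4k+4}$ are divisible by $h$ in $C^k(M,\mathbb F)$ (i.e. $f^{4k+4}=hv$ and $g^{4k+4}=hw$ for some $v,w\in C^k(M,\mathbb F)$).
   Context: Manifolds are Hausdorff and second countable. *)

From HB Require Import structures.
From mathcomp Require Import all_boot all_order all_algebra.
From mathcomp Require Import all_classical all_reals topology normedtype derive.
From mathcomp Require Import complex.
Set Implicit Arguments.
Unset Strict Implicit.
Unset Printing Implicit Defensive.
Import Order.TTheory GRing.Theory Num.Theory.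
Import numFieldNormedType.Exports.
Local Open Scope classical_set_scope.
Local Open Scope ring_scope.

Section CkDefs.
Variable R : realType.

Definition evec (n : nat) (i : 'I_n) : 'rV[R]_n := delta_mx 0 i.

Section CkOn.
Variables (n : nat) (V : normedModType R).

Fixpoint Ck_on (k : nat) (U : set 'rV[R]_n) (f : 'rV[R]_n -> V) : Prop :=
  (forall x, U x -> {for x, continuous f}) /\
  match k with
  | 0%N => True
  | k'.+1 => (forall (i : 'I_n) x, U x -> derivable f x (evec i)) /\
             (forall i : 'I_n, Ck_on k' U (fun x => 'D_(evec i) f x))
  end.
End CkOn.

Record chart (T : topologicalType) := Chart {
  ch_dim : nat;
  ch_dom : set T;
  ch_map : T -> 'rV[R]_ch_dim;
  ch_inv : 'rV[R]_ch_dim -> T }.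
Arguments ch_dom {T} c.
Arguments ch_map {T} c _.
Arguments ch_inv {T} c _.

Definition ch_img (T : topologicalType) (c : chart T) : set 'rV[R]_(ch_dim c) :=
  ch_map c @` ch_dom c.
Arguments ch_img {T} c.

Definition is_chart (T : topologicalType) (c : chart T) : Prop :=
  [/\ open (ch_dom c), open (ch_img c),
      (forall x, ch_dom c x -> ch_inv c (ch_map c x) = x),
      (forall y, ch_img c y -> ch_map c (ch_inv c y) = y) &
      ({within ch_dom c, continuous (ch_map c)} /\
       {within ch_img c, continuous (ch_inv c)})].

Definition Ck_atlas (k : nat) (T : topologicalType) (A : set (chart T)) : Prop :=
  [/\ (forall c, A c -> is_chart c),
      (forall x : T, exists2 c, A c & ch_dom c x) &
      (forall c1 c2, A c1 -> A c2 ->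
         Ck_on k (ch_map c1 @` (ch_dom c1 `&` ch_dom c2))
                 (fun y => ch_map c2 (ch_inv c1 y)))].

Definition Ck_fun (k : nat) (T : topologicalType) (A : set (chart T))
  (V : normedModType R) (f : T -> V) : Prop :=
  forall c, A c -> Ck_on k (ch_img c) (fun y => f (ch_inv c y)).

Definition Ck_funC (k : nat) (T : topologicalType) (A : set (chart T))
  (f : T -> R[i]) : Prop :=
  Ck_fun k A (fun x => complex.Re (f x) : R) /\
  Ck_fun k A (fun x => complex.Im (f x) : R).

End CkDefs.

From HB Require Import structures.
From mathcomp Require Import all_boot all_order all_algebra.
From mathcomp Require Import all_classical all_reals topology normedtype derive.
From mathcomp Require Import complex.
From mathcomp Require Import ring lra zify landau.
Set Implicit Arguments.
Unset Strict Implicit.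
Unset Printing Implicit Defensive.
Import Order.TTheory GRing.Theory Num.Theory.
Import numFieldNormedType.Exports.
Local Open Scope classical_set_scope.
Local Open Scope ring_scope.

(* Take h = |f|^2 + |g|^2, so that f^N = h * (f^N / h) with N = 4k + 4.  The
   quotient is the composite of the real coordinates of (f, g) with a map
   P(p) / |p|^2 of R^m, where the polynomial P vanishes to order N at 0.  Such a
   quotient P / |p|^(2n), with P vanishing to order d + 2n, is bounded by C |p|^d
   near 0, so it is continuous, and for d > 1 it is differentiable at 0 with zero
   derivative; away from 0 its partial derivatives are again quotients of this
   shape with d lowered by one.  Hence it is C^k on R^m as soon as d > k, and C^k
   functions on M are stable under composition with such maps. *)

Section CkDiff.
Context {R : realType} {m : nat}.

(* Unlike [Ck_on], this asks for Frechet differentiability on all of R^m: the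
   chain rule needs it for the outer map. *)
Fixpoint Ck_diff (k : nat) (F : 'rV[R]_m -> R) : Prop :=
  (forall p, {for p, continuous F}) /\
  match k with
  | 0%N => True
  | k'.+1 => (forall p, differentiable F p) /\
             (forall j : 'I_m, Ck_diff k' (fun p => 'D_(evec R j) F p))
  end.

End CkDiff.

Section PolyVanishing.
Context {R : realType} {m : nat}.

(* [poly_vanishing D P]: P is a polynomial in the coordinates of p all of whose
   monomials have degree at least D. *)
Inductive poly_vanishing : nat -> ('rV[R]_m -> R) -> Prop :=
| pv_zero D : poly_vanishing D (fun _ => 0)
| pv_cst c : poly_vanishing 0 (fun _ => c)
| pv_coord j : poly_vanishing 1 (fun p => p 0 j)
| pv_add D P Q : poly_vanishing D P -> poly_vanishing D Q ->
    poly_vanishing D (fun p => P p + Q p)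
| pv_mul a b P Q : poly_vanishing a P -> poly_vanishing b Q ->
    poly_vanishing (a + b) (fun p => P p * Q p)
| pv_pred D P : poly_vanishing D.+1 P -> poly_vanishing D P.

Implicit Types (P Q : 'rV[R]_m -> R) (p : 'rV[R]_m).

Lemma poly_vanishing_le D D' P :
  (D' <= D)%N -> poly_vanishing D P -> poly_vanishing D' P.
Proof.
move=> /subnKC <-; elim: (D - D')%N => [|e IH]; first by rewrite addn0.
by rewrite addnS => /pv_pred.
Qed.

Lemma poly_vanishing_coordX (j : 'I_m) n : poly_vanishing n (fun p => p 0 j ^+ n).
Proof.
elim: n => [|n IH]; first by under eq_fun do rewrite expr0; exact: pv_cst.
by under eq_fun do rewrite exprS; exact: pv_mul (pv_coord j) IH.
Qed.

Definition sumsq p := \sum_j p 0 j ^+ 2.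

Lemma poly_vanishing_sumsq : poly_vanishing 2 sumsq.
Proof.
rewrite /sumsq; elim: (index_enum _) => [|j s IH].
  by under eq_fun do rewrite big_nil; exact: pv_zero.
under eq_fun do rewrite big_cons.
exact: pv_add (poly_vanishing_coordX j 2) IH.
Qed.

Lemma poly_vanishing_differentiable D P :
  poly_vanishing D P -> forall p, differentiable P p.
Proof.
move=> + p; elim=> {D P} [D|c|j|D P Q _ dP _ dQ|a b P Q _ dP _ dQ|//].
- exact: differentiable_cst.
- exact: differentiable_cst.
- exact: differentiable_coord.
- exact: differentiableD.
- exact: differentiableM.
Qed.

Lemma poly_vanishing_derivable D P :
  poly_vanishing D P -> forall p v, derivable P p v.
Proof.
by move=> hP p v; apply/diff_derivable; exact: poly_vanishing_differentiable hP p.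
Qed.

Lemma derive_coord (j : 'I_m) (v p : 'rV[R]_m) :
  'D_v (fun q : 'rV[R]_m => q 0 j) p = v 0 j.
Proof.
have := @derive_mx R _ 1 m id p v (@derivable_id R _ p v).
by rewrite derive_id => /(congr1 (fun M : 'M_(1, m) => M 0 j)); rewrite mxE.
Qed.

Lemma poly_vanishing_derive D P : poly_vanishing D P -> forall v,
  exists2 Q, poly_vanishing D.-1 Q & forall p, 'D_v P p = Q p.
Proof.
move=> + v; elim=> {D P} [D|c|j|D P Q hP [P' hP' eP] hQ [Q' hQ' eQ]
             |a b P Q hP [P' hP' eP] hQ [Q' hQ' eQ]|D P _ [P' hP' eP]].
- by exists (fun _ => 0) => [|p]; [exact: pv_zero|exact: derive_cst].
- by exists (fun _ => 0) => [|p]; [exact: pv_zero|exact: derive_cst].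
- by exists (fun _ => v 0 j) => [|p]; [exact: pv_cst|exact: derive_coord].
- exists (fun p => P' p + Q' p) => [|p]; first exact: pv_add.
  by rewrite -[fun p => _ + _]/(P + Q) deriveD -?eP -?eQ //;
    [exact: (poly_vanishing_derivable hP)|exact: (poly_vanishing_derivable hQ)].
- exists (fun p => P p * Q' p + Q p * P' p) => [|p].
    apply: pv_add.
      by apply: poly_vanishing_le (pv_mul hP hQ'); lia.
    by apply: poly_vanishing_le (pv_mul hQ hP'); lia.
  by rewrite -[fun p => _ * _]/(P * Q) deriveM -?eP -?eQ //;
    [exact: (poly_vanishing_derivable hP)|exact: (poly_vanishing_derivable hQ)].
- by exists P' => //; apply: poly_vanishing_le hP'; lia.
Qed.

Lemma normr_coord_le p (j : 'I_m) : `|p 0 j| <= `|p|.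
Proof.
rewrite [X in _ <= X]/Num.Def.normr /= mx_normrE.
exact: le_trans (le_bigmax _ _ (0, j)).
Qed.

Lemma poly_vanishing_bound D P : poly_vanishing D P ->
  exists2 C, 0 <= C & forall p, `|p| <= 1 -> `|P p| <= C * `|p| ^+ D.
Proof.
elim=> {D P} [D|c|j|D P Q _ [C1 C10 hP] _ [C2 C20 hQ]
             |a b P Q _ [C1 C10 hP] _ [C2 C20 hQ]|D P _ [C C0 hP]].
- by exists 0 => // p _; rewrite normr0 mul0r.
- by exists `|c| => // p _; rewrite expr0 mulr1.
- by exists 1 => // p _; rewrite expr1 mul1r normr_coord_le.
- exists (C1 + C2) => [|p p1]; first exact: addr_ge0.
  by rewrite mulrDl (le_trans (ler_normD _ _)) // lerD ?hP ?hQ.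
- exists (C1 * C2) => [|p p1]; first exact: mulr_ge0.
  by rewrite normrM exprD mulrACA ler_pM ?normr_ge0 ?hP ?hQ.
- exists C => // p p1; rewrite (le_trans (hP p p1)) // exprS.
  by rewrite ler_wpM2l // ler_piMl ?exprn_ge0 ?normr_ge0.
Qed.

Lemma poly_vanishing_eq0 D P : poly_vanishing D.+1 P -> P 0 = 0.
Proof.
case/poly_vanishing_bound=> C _ /(_ 0); rewrite normr0 ler01 expr0n mulr0.
by move=> /(_ isT); rewrite normr_le0 => /eqP.
Qed.

Lemma sumsq_ge0 p : 0 <= sumsq p.
Proof. by apply: sumr_ge0 => j _; exact: sqr_ge0. Qed.

Lemma sqr_norm_le_sumsq p : `|p| ^+ 2 <= sumsq p.
Proof.
rewrite -[X in _ <= X](sqr_sqrtr (sumsq_ge0 p)).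
rewrite lerXn2r ?nnegrE ?normr_ge0 ?sqrtr_ge0 //.
rewrite [X in X <= _]/Num.Def.normr /= mx_normrE.
apply: bigmax_le; first exact: sqrtr_ge0.
move=> [i j] _ /=; rewrite (ord1 i) -sqrtr_sqr ler_sqrt; last exact: sumsq_ge0.
rewrite /sumsq (bigD1 j) //= lerDl; apply: sumr_ge0 => l _; exact: sqr_ge0.
Qed.

Lemma sumsq_eq0 p : (sumsq p == 0) = (p == 0).
Proof.
apply/eqP/eqP=> [p0|->]; last by rewrite /sumsq big1 // => j _; rewrite mxE expr0n.
apply/normr0_eq0/eqP; rewrite -[_ == 0]/((0 < 2)%N && _) -expf_eq0 eq_le.
by rewrite exprn_ge0 ?normr_ge0 // andbT -p0 sqr_norm_le_sumsq.
Qed.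

Lemma poly_vanishing_cpow (a b : 'I_m) n :
  poly_vanishing n (fun p => complex.Re ((p 0 a +i* p 0 b)%C ^+ n)) /\
  poly_vanishing n (fun p => complex.Im ((p 0 a +i* p 0 b)%C ^+ n)).
Proof.
elim: n => [|n [IHr IHi]].
  by split; under eq_fun do rewrite expr0; [exact: pv_cst|exact: pv_zero].
have cpowS (z : R[i]) : complex.Re (z ^+ n.+1) =
      complex.Re (z ^+ n) * complex.Re z + (-1) * (complex.Im (z ^+ n) * complex.Im z)
    /\ complex.Im (z ^+ n.+1) =
      complex.Re (z ^+ n) * complex.Im z + complex.Im (z ^+ n) * complex.Re z.
  rewrite exprSr; case: (z ^+ n) => ? ?; case: z => ? ? /=; split; ring.
split; under eq_fun do rewrite (cpowS _).1 /= || rewrite (cpowS _).2 /=.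
  apply: pv_add; first by apply: poly_vanishing_le (pv_mul IHr (pv_coord a)); lia.
  by apply: poly_vanishing_le (pv_mul (pv_cst (-1)) (pv_mul IHi (pv_coord b))); lia.
apply: poly_vanishing_le (pv_add (pv_mul IHr (pv_coord b)) (pv_mul IHi (pv_coord a))).
by rewrite addn1.
Qed.

Lemma poly_vanishing_Ck_diff k D P : poly_vanishing D P -> Ck_diff k P.
Proof.
elim: k D P => [|k IH] D P hP;
  (split; first by move=> p; apply/differentiable_continuous;
                   exact: poly_vanishing_differentiable hP p) => //.
split=> [|j]; first exact: poly_vanishing_differentiable hP.
have [Q hQ eQ] := poly_vanishing_derive hP (evec R j).
by rewrite (funext eQ); exact: IH hQ.
Qed.

End PolyVanishing.
Arguments pv_cst {R m} c.
Arguments poly_vanishing_differentiable {R m D P} _ p.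
Arguments poly_vanishing_derivable {R m D P} _ p v.

Section CkOnOpen.
Context {R : realType} {n : nat} {U : set 'rV[R]_n}.
Hypothesis oU : open U.

Lemma Ck_onS {V : normedModType R} k (f : 'rV[R]_n -> V) :
  Ck_on k.+1 U f -> Ck_on k U f.
Proof.
elim: k f => [|k IH] f [cf [df Df]]; first by split.
by split=> //; split=> // i; exact: IH.
Qed.

Lemma near_eq_open {V : normedModType R} (f g : 'rV[R]_n -> V) y :
  (forall z, U z -> f z = g z) -> U y -> {near y, f =1 g}.
Proof. by move=> efg Uy; apply: filterS (open_nbhs_nbhs (conj oU Uy)). Qed.
Arguments near_eq_open {V f g y}.

Lemma Ck_on_eq {V : normedModType R} k (f g : 'rV[R]_n -> V) :
  (forall y, U y -> f y = g y) -> Ck_on k U f -> Ck_on k U g.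
Proof.
elim: k f g => [|k IH] f g efg [cf hf];
  (split=> [y Uy|]; first by apply: cvg_trans (near_eq_cvg (near_eq_open efg Uy)) _;
                             rewrite -(efg y Uy); exact: cf) => //.
case: hf => df Df; split=> [i y Uy|i].
  exact: near_eq_derivable (near_eq_open efg Uy) (df i y Uy).
by apply: IH (Df i) => y Uy; exact/near_eq_derive/(near_eq_open efg Uy).
Qed.

Lemma Ck_on_cst {V : normedModType R} k (c : V) : Ck_on k U (fun _ => c).
Proof.
elim: k c => [|k IH] c; (split=> [y _|]; first exact: cst_continuous) => //.
split=> [i y _|i]; first exact: derivable_cst.
suff -> : (fun y => 'D_(evec R i) (fun=> c) y) = fun=> 0 by exact: IH.
by apply/funext => y; exact: derive_cst.
Qed.

Lemma Ck_on_add {V : normedModType R} k (f g : 'rV[R]_n -> V) :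
  Ck_on k U f -> Ck_on k U g -> Ck_on k U (f + g).
Proof.
elim: k f g => [|k IH] f g [cf hf] [cg hg];
  (split=> [y Uy|]; first exact: continuousD (cf y Uy) (cg y Uy)) => //.
case: hf hg => [df Df] [dg Dg]; split=> [i y Uy|i].
  exact: derivableD (df i y Uy) (dg i y Uy).
apply: Ck_on_eq (IH _ _ (Df i) (Dg i)) => y Uy.
by symmetry; apply: deriveD; [exact: df|exact: dg].
Qed.

Lemma Ck_on_mul k (f g : 'rV[R]_n -> R) :
  Ck_on k U f -> Ck_on k U g -> Ck_on k U (f * g).
Proof.
elim: k f g => [|k IH] f g [cf hf] [cg hg];
  (split=> [y Uy|]; first exact: continuousM (cf y Uy) (cg y Uy)) => //.
case: hf hg => [df Df] [dg Dg]; split=> [i y Uy|i].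
  exact: derivableM (df i y Uy) (dg i y Uy).
have Ckf : Ck_on k U f by apply: Ck_onS; do 2?split.
have Ckg : Ck_on k U g by apply: Ck_onS; do 2?split.
have CkD : Ck_on k U (f * 'D_(evec R i) g + g * 'D_(evec R i) f).
  by apply: Ck_on_add => //; [exact: IH _ _ Ckf (Dg i)|exact: IH _ _ Ckg (Df i)].
apply: Ck_on_eq CkD => y Uy.
by symmetry; apply: deriveM; [exact: df|exact: dg].
Qed.

Lemma Ck_on_sum k (I : Type) (s : seq I) (F : I -> 'rV[R]_n -> R) :
  (forall j, Ck_on k U (F j)) -> Ck_on k U (\sum_(j <- s) F j).
Proof.
move=> CkF; elim: s => [|j s IH]; first by rewrite big_nil; exact: Ck_on_cst.
by rewrite big_cons; exact: Ck_on_add.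
Qed.

End CkOnOpen.

Section ChainRule.
Context {R : realType}.

Lemma derive_line {V W : normedModType R} (f : V -> W) (x v : V) :
  'D_v f x = 'D_1 (fun h : R => f (h *: v + x)) 0.
Proof.
rewrite /derive; set g1 := fun h => h^-1 *: _; set g2 := fun h => h^-1 *: _.
suff -> : g1 = g2 by [].
by rewrite funeqE /g1 /g2 => h /=; rewrite addr0 scale0r add0r [_%:A]mulr1.
Qed.

Lemma derive_comp {U V W : normedModType R} (f : V -> W) (g : U -> V) x v :
  differentiable f (g x) -> derivable g x v ->
  derivable (f \o g) x v /\ 'D_v (f \o g) x = 'd f (g x) ('D_v g x).
Proof.
move=> df dg; pose c h := g (h *: v + x).
have dc : differentiable c 0 by apply/derivable1_diffP; exact/(derivable1P g x v).1.
have c0 : c 0 = g x by rewrite /c scale0r add0r.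
have dfc : differentiable (f \o c) 0 by apply: differentiable_comp; rewrite ?c0.
split; first by apply/derivable1P/derivable1_diffP.
rewrite derive_line -[fun h => _]/(f \o c) deriveE // diff_comp ?c0 //=.
by congr ('d f (g x) _); rewrite -deriveE // [RHS]derive_line.
Qed.

Lemma diff_rowE {m : nat} (f : 'rV[R]_m -> R) p w : differentiable f p ->
  'd f p w = \sum_j w 0 j * 'D_(evec R j) f p.
Proof.
move=> df; rewrite [in LHS](row_sum_delta w) linear_sum; apply: eq_bigr => j _.
by rewrite linearZ -deriveE.
Qed.

Lemma continuous_row {m n : nat} (F : 'I_m -> 'rV[R]_n -> R) y :
  (forall j, {for y, continuous (F j)}) ->
  {for y, continuous (fun z => \row_j F j z : 'rV[R]_m)}.
Proof.
move=> cF; have -> : (fun z => \row_j F j z : 'rV[R]_m) =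
    \sum_j (fun z => F j z *: 'e_j).
  apply/funext => z; rewrite fct_sumE [LHS]row_sum_delta.
  by apply: eq_bigr => j _; rewrite mxE.
apply: (big_ind (fun h => {for y, continuous h})) => [|f g|j _].
- exact: cst_continuous.
- exact: continuousD.
- exact: continuousZr_tmp.
Qed.

Lemma derivable_row {m n : nat} (F : 'I_m -> 'rV[R]_n -> R) y v :
  (forall j, derivable (F j) y v) ->
  derivable (fun z => \row_j F j z : 'rV[R]_m) y v.
Proof.
move=> dF; apply/derivable_mxP => a j; rewrite (ord1 a).
by under eq_fun do rewrite mxE; exact: dF.
Qed.

Lemma Ck_on_comp k m n (U : set 'rV[R]_n) (Phi : 'rV[R]_m -> R)
    (F : 'I_m -> 'rV[R]_n -> R) :
  open U -> Ck_diff k Phi -> (forall j, Ck_on k U (F j)) ->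
  Ck_on k U (fun y => Phi (\row_j F j y)).
Proof.
move=> oU; elim: k m Phi F => [|k IH] m Phi F [cPhi hPhi] CkF;
  (split=> [y Uy|]; first exact: continuous_comp
     (continuous_row (fun j => (CkF j).1 y Uy)) (cPhi _)) => //.
case: hPhi => dPhi DPhi.
have dg i y : U y -> derivable (fun z => \row_j F j z : 'rV[R]_m) y (evec R i).
  by move=> Uy; apply: derivable_row => j; exact: (CkF j).2.1.
split=> [i y Uy|i]; first exact: (derive_comp (dPhi _) (dg i y Uy)).1.
have CkS : Ck_on k U (\sum_j 'D_(evec R i) (F j) *
                        (fun y => 'D_(evec R j) Phi (\row_l F l y))).
  apply: (Ck_on_sum oU) => j; apply: Ck_on_mul => //; first exact: (CkF j).2.2.
  apply: (IH _ (fun p => 'D_(evec R j) Phi p) _ (DPhi j)) => l.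
  by apply: Ck_onS; exact: CkF.
apply: (Ck_on_eq oU _ CkS) => y Uy; rewrite fct_sumE.
rewrite -[fun y => Phi _]/(Phi \o fun z => \row_j F j z : 'rV[R]_m).
rewrite (derive_comp (dPhi _) (dg i y Uy)).2 diff_rowE // (derive_mx (dg i y Uy)).
apply: eq_bigr => j _; rewrite !mxE /=; congr (_ * _).
by under eq_fun do rewrite mxE.
Qed.

End ChainRule.

Section PowerBound.
Context {R : realType} {V : normedModType R}.

Lemma le_pow_eq0 (f : V -> R) C d : (0 < d)%N ->
  (forall q, `|q| <= 1 -> `|f q| <= C * `|q| ^+ d) -> f 0 = 0.
Proof.
move=> d0 /(_ 0); rewrite normr0 ler01 expr0n (negbTE (lt0n_neq0 d0)) mulr0.
by move=> /(_ isT); rewrite normr_le0 => /eqP.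
Qed.

Lemma continuous0_le_pow (f : V -> R) C d : (0 < d)%N -> 0 < C ->
  (forall q, `|q| <= 1 -> `|f q| <= C * `|q| ^+ d) -> {for 0, continuous f}.
Proof.
move=> d0 C0 hf; apply/cvgrPdist_le => e e0; rewrite (le_pow_eq0 d0 hf).
near=> q; rewrite sub0r normrN.
have q1 : `|q| <= 1 by near: q; apply: nbhs0_le.
have qe : `|q| <= e / C by near: q; apply: nbhs0_le; exact: divr_gt0.
apply: le_trans (hf q q1) _; rewrite mulrC -ler_pdivlMr //.
apply: le_trans qe; case: d d0 {hf} => // d _; rewrite exprS ler_piMr //.
exact: exprn_ile1.
Unshelve. all: by end_near. Qed.

Lemma differentiable0_le_pow (f : V -> R) C d : (1 < d)%N -> 0 < C ->
  (forall q, `|q| <= 1 -> `|f q| <= C * `|q| ^+ d) ->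
  differentiable f 0 /\ forall v, 'D_v f 0 = 0.
Proof.
move=> d1 C0 hf; have f0 := le_pow_eq0 (ltnW d1) hf.
have f_eq_o : f \o shift 0 = cst (f 0) + \0 +o_ 0 id.
  apply/eqaddoP => e e0; near=> q.
  change (`|f (q + 0) - (f 0 + 0)| <= e * `|q|); rewrite !addr0 f0 subr0.
  have q1 : `|q| <= 1 by near: q; apply: nbhs0_le.
  have qe : `|q| <= e / C by near: q; apply: nbhs0_le; exact: divr_gt0.
  apply: le_trans (hf q q1) _; case: d d1 {hf} => // -[|d] // _.
  rewrite exprSr mulrA ler_wpM2r // mulrC -ler_pdivlMr //.
  apply: le_trans qe; rewrite exprS ler_piMr //; exact: exprn_ile1.
have dU : 'd f 0 = \0 :> (V -> R) by apply/diff_unique => //; exact: cst_continuous.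
have df : differentiable f 0.
  by apply/diff_locallyP; rewrite dU; split => //; exact: cst_continuous.
by split=> // v; rewrite deriveE // dU.
Unshelve. all: by end_near. Qed.

End PowerBound.

Section RationalVanishing.
Context {R : realType} {m : nat}.
Implicit Types (P Phi : 'rV[R]_m -> R) (p : 'rV[R]_m).

(* Quotients P / |p|^(2n) with P vanishing to order d + 2n; they behave like |p|^d
   near 0. *)
Definition rat_vanishing d Phi := exists n P,
  poly_vanishing (d + 2 * n) P /\ Phi = fun p => P p / sumsq p ^+ n.

Lemma rat_vanishing_bound d Phi : (0 < d)%N -> rat_vanishing d Phi ->
  exists2 C, 0 < C & forall p, `|p| <= 1 -> `|Phi p| <= C * `|p| ^+ d.
Proof.
move=> d0 [n [P [hP ->]]]; have [C C0 hC] := poly_vanishing_bound hP.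
exists (C + 1) => [|p p1]; first exact: ltr_wpDl C0 ltr01.
have [/eqP|sn0] := eqVneq (sumsq p) 0.
  rewrite sumsq_eq0 => /eqP ->; rewrite -(prednK (_ : 0 < d + 2 * n)%N) in hP; last lia.
  by rewrite (poly_vanishing_eq0 hP) mul0r normr0 mulr_ge0 ?exprn_ge0 //; lra.
have sp : 0 < sumsq p ^+ n by rewrite exprn_gt0 // lt0r sn0 sumsq_ge0.
rewrite normrM normfV (ger0_norm (ltW sp)) ler_pdivrMr //.
apply: le_trans (hC p p1) _; rewrite exprD exprM mulrA.
rewrite ler_pM ?mulr_ge0 ?exprn_ge0 ?lerXn2r ?nnegrE ?exprn_ge0 ?sumsq_ge0 //.
  by rewrite ler_wpM2r ?exprn_ge0 //; lra.
exact: sqr_norm_le_sumsq.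
Qed.

Lemma rat_vanishing_eq0 d Phi : (0 < d)%N -> rat_vanishing d Phi -> Phi 0 = 0.
Proof. by move=> d0 /(rat_vanishing_bound d0) [C _]; exact: le_pow_eq0. Qed.

Lemma differentiable_div_sumsqX P n p : differentiable P p -> sumsq p != 0 ->
  differentiable (fun q => P q / sumsq q ^+ n) p.
Proof.
move=> dP sn0; rewrite (_ : (fun q => _) = P * fun q => ((sumsq ^+ n) q)^-1);
  last by rewrite exprfctE.
apply/differentiableM/differentiableV => //; last by rewrite exprfctE expf_neq0.
case: n => [|n]; first by rewrite expr0; exact: differentiable_cst.
exact/differentiableX/poly_vanishing_differentiable/poly_vanishing_sumsq.
Qed.

Lemma derive_div_sumsqX P n p v : derivable P p v -> sumsq p != 0 ->
  'D_v (fun q => P q / sumsq q ^+ n) p =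
  ('D_v P p * sumsq p - n%:R * (P p * 'D_v sumsq p)) / sumsq p ^+ n.+1.
Proof.
move=> dP sn0; have ds := poly_vanishing_derivable poly_vanishing_sumsq p v.
have snn0 : (sumsq ^+ n) p != 0 by rewrite exprfctE expf_neq0.
rewrite (_ : (fun q => _) = P * fun q => ((sumsq ^+ n) q)^-1); last by rewrite exprfctE.
have dsn : derivable (sumsq ^+ n) p v by exact: derivableX.
have dinv : derivable (fun q => ((sumsq ^+ n) q)^-1) p v by exact: derivableV.
rewrite (deriveM dP dinv) (deriveV snn0 dsn) (deriveX n ds) !exprfctE /=.
move: ('D_v P p) ('D_v sumsq p) (P p) (sumsq p) sn0 => a b c s s0 {snn0 dsn dinv ds dP}.
rewrite -![_ *: _]/(_ * _); case: n => [|n] /=; rewrite ?expr0 ?exprS; first by field.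
by field; rewrite expf_neq0.
Qed.

Lemma rat_vanishing_continuous d Phi : (0 < d)%N -> rat_vanishing d Phi ->
  forall p, {for p, continuous Phi}.
Proof.
move=> d0 hPhi p; have [/eqP|sn0] := eqVneq (sumsq p) 0.
  rewrite sumsq_eq0 => /eqP ->; have [C C0 hC] := rat_vanishing_bound d0 hPhi.
  exact: continuous0_le_pow d0 C0 hC.
case: hPhi => n [P [hP ->]]; apply: differentiable_continuous.
exact: differentiable_div_sumsqX (poly_vanishing_differentiable hP p) sn0.
Qed.

Lemma rat_vanishing_derive d Phi : (1 < d)%N -> rat_vanishing d Phi ->
  (forall p, differentiable Phi p) /\
  forall v, exists2 Psi, rat_vanishing d.-1 Psi & forall p, 'D_v Phi p = Psi p.
Proof.
move=> d1 hPhi; have [C C0 hC] := rat_vanishing_bound (ltnW d1) hPhi.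
have [df0 dD0] := differentiable0_le_pow d1 C0 hC.
case: hPhi => n [P [hP ePhi]]; split=> [p|v].
  have [/eqP|sn0] := eqVneq (sumsq p) 0; first by rewrite sumsq_eq0 => /eqP ->.
  rewrite ePhi.
  exact: differentiable_div_sumsqX (poly_vanishing_differentiable hP p) sn0.
have [Q hQ eQ] := poly_vanishing_derive hP v.
have [S hS eS] := poly_vanishing_derive poly_vanishing_sumsq v.
pose P' q := Q q * sumsq q + - n%:R * (P q * S q).
have hP' : poly_vanishing (d.-1 + 2 * n.+1) P'.
  apply: pv_add.
    by apply: poly_vanishing_le (pv_mul hQ poly_vanishing_sumsq); lia.
  by apply: poly_vanishing_le (pv_mul (pv_cst (- n%:R)) (pv_mul hP hS)); lia.
have hPsi : rat_vanishing d.-1 (fun q => P' q / sumsq q ^+ n.+1) by exists n.+1, P'.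
exists (fun q => P' q / sumsq q ^+ n.+1) => // p.
have [/eqP|sn0] := eqVneq (sumsq p) 0.
  by rewrite sumsq_eq0 => /eqP ->; rewrite dD0 (rat_vanishing_eq0 _ hPsi) //; lia.
rewrite ePhi derive_div_sumsqX //; last exact: poly_vanishing_derivable hP p v.
by rewrite eQ eS /P' mulNr.
Qed.

Lemma rat_vanishing_Ck_diff k d Phi : (k < d)%N -> rat_vanishing d Phi -> Ck_diff k Phi.
Proof.
elim: k d Phi => [|k IH] d Phi kd hPhi;
  (split; first by apply: rat_vanishing_continuous hPhi; lia) => //.
have d1 : (1 < d)%N by lia.
have [dPhi DPhi] := rat_vanishing_derive d1 hPhi.
split=> // j; have [Psi hPsi ePsi] := DPhi (evec R j).
by rewrite (funext ePsi); apply: IH hPsi; lia.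
Qed.

End RationalVanishing.

Section CkFunctions.
Context {R : realType} {T : topologicalType} (k : nat) (A : set (chart R T)).
Hypothesis chartsA : forall c, A c -> is_chart c.

Lemma Ck_fun_cst (a : R) : Ck_fun k A (fun _ : T => a).
Proof. by move=> c Ac; exact: Ck_on_cst. Qed.

Lemma Ck_fun_comp m (Phi : 'rV[R]_m -> R) (G : 'I_m -> T -> R) :
  Ck_diff k Phi -> (forall j, Ck_fun k A (G j)) ->
  Ck_fun k A (fun z => Phi (\row_j G j z)).
Proof.
move=> CkPhi CkG c Ac; have [_ oimg _ _ _] := chartsA Ac.
exact: Ck_on_comp oimg CkPhi (fun j => CkG j c Ac).
Qed.

Variables (m : nat) (G : 'I_m -> T -> R).
Hypothesis CkG : forall j, Ck_fun k A (G j).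

Lemma Ck_fun_sumsq_row : Ck_fun k A (fun z => sumsq (\row_j G j z)).
Proof. exact: Ck_fun_comp (poly_vanishing_Ck_diff k poly_vanishing_sumsq) CkG. Qed.

Lemma sumsq_row_eq0 x : (forall j, G j x = 0) -> sumsq (\row_j G j x) = 0.
Proof.
by move=> Gx; apply/eqP; rewrite sumsq_eq0; apply/eqP/rowP => j; rewrite !mxE.
Qed.

Lemma mul_sumsq_div d (P : 'rV[R]_m -> R) p : (0 < d)%N -> poly_vanishing d P ->
  P p = sumsq p * (P p / sumsq p).
Proof.
move=> /prednK <- hP; have [/eqP|sn0] := eqVneq (sumsq p) 0.
  by rewrite sumsq_eq0 => /eqP ->; rewrite (poly_vanishing_eq0 hP) mul0r mulr0.
by rewrite mulrC divfK.
Qed.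

Lemma Ck_fun_sumsq_divides d (P : 'rV[R]_m -> R) :
  (k.+2 < d)%N -> poly_vanishing d P ->
  exists2 v, Ck_fun k A v &
    forall y, P (\row_j G j y) = sumsq (\row_j G j y) * v y.
Proof.
move=> kd hP; exists (fun z => P (\row_j G j z) / sumsq (\row_j G j z)).
  apply: (@Ck_fun_comp _ (fun p => P p / sumsq p)) => //.
  apply: (@rat_vanishing_Ck_diff _ _ _ (d - 2)); first lia.
  exists 1%N, P; rewrite muln1 subnK; last lia.
  by split=> //; under [RHS]eq_fun do rewrite expr1.
by move=> y; apply: mul_sumsq_div hP; lia.
Qed.

End CkFunctions.

Section CommonDivisor.
Context {R : realType} {T : topologicalType} (k : nat) (A : set (chart R T)).
Hypothesis chartsA : forall c, A c -> is_chart c.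
Variable N : nat.
Hypothesis kN : (k.+2 < N)%N.

Lemma real_common_divisor (f g : T -> R) x :
  Ck_fun k A f -> Ck_fun k A g -> f x = 0 -> g x = 0 ->
  exists h : T -> R, [/\ Ck_fun k A h, h x = 0,
    (exists2 v : T -> R, Ck_fun k A v & forall y, f y ^+ N = h y * v y) &
    (exists2 w : T -> R, Ck_fun k A w & forall y, g y ^+ N = h y * w y)].
Proof.
move=> Ckf Ckg fx gx; pose G (j : 'I_2) := nth f [:: f; g] j.
have CkG j : Ck_fun k A (G j) by case: j => [[|[|j]]].
have Gx j : G j x = 0 by case: j => [[|[|j]]].
have factor j : exists2 v, Ck_fun k A v &
    forall y, G j y ^+ N = sumsq (\row_l G l y) * v y.
  have [v Ckv ev] := Ck_fun_sumsq_divides chartsA CkG kN (poly_vanishing_coordX j N).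
  by exists v => // y; rewrite -ev mxE.
exists (fun z => sumsq (\row_j G j z)); split.
- exact: (Ck_fun_sumsq_row chartsA CkG).
- exact: sumsq_row_eq0.
- exact: factor ord0.
- exact: factor ord_max.
Qed.

Lemma complex_common_divisor (f g : T -> R[i]) x :
  Ck_funC k A f -> Ck_funC k A g -> f x = 0 -> g x = 0 ->
  exists h : T -> R[i], [/\ Ck_funC k A h, h x = 0,
    (exists2 v : T -> R[i], Ck_funC k A v & forall y, f y ^+ N = h y * v y) &
    (exists2 w : T -> R[i], Ck_funC k A w & forall y, g y ^+ N = h y * w y)].
Proof.
move=> [Ckfr Ckfi] [Ckgr Ckgi] fx gx.
pose G (j : 'I_4) := nth (fun z => complex.Re (f z))
  [:: fun z => complex.Re (f z); fun z => complex.Im (f z);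
      fun z => complex.Re (g z); fun z => complex.Im (g z)] j.
have CkG j : Ck_fun k A (G j) by case: j => [[|[|[|[|j]]]]].
have Gx j : G j x = 0 by case: j => [[|[|[|[|j]]]]]; rewrite /G /= ?fx ?gx.
have factor (u : T -> R[i]) (a b : 'I_4) :
    (forall z, u z = (G a z +i* G b z)%C) -> exists2 v, Ck_funC k A v &
    forall y, u y ^+ N = (sumsq (\row_l G l y))%:C%C * v y.
  move=> eu; have [hre him] := poly_vanishing_cpow (R := R) a b N.
  have [vr Ckvr evr] := Ck_fun_sumsq_divides chartsA CkG kN hre.
  have [vi Ckvi evi] := Ck_fun_sumsq_divides chartsA CkG kN him.
  exists (fun z => vr z +i* vi z)%C => // y.
  move: (evr y) (evi y); rewrite !mxE -eu; case: (u y ^+ _) => re im /= -> ->.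
  by congr (_ +i* _)%C; ring.
exists (fun z => (sumsq (\row_j G j z))%:C%C); split.
- by split; [exact: (Ck_fun_sumsq_row chartsA CkG)|exact: Ck_fun_cst].
- by rewrite /= sumsq_row_eq0.
- apply: (factor _ (@Ordinal 4 0 isT) (@Ordinal 4 1 isT)) => z.
  by rewrite /G /=; case: (f z).
- apply: (factor _ (@Ordinal 4 2 isT) (@Ordinal 4 3 isT)) => z.
  by rewrite /G /=; case: (g z).
Qed.

End CommonDivisor.

Theorem lemma2p4 (R : realType) (k : nat) (T : topologicalType)
  (A : set (chart R T)) :
  hausdorff_space T -> @second_countable T -> Ck_atlas k A ->
  (forall (f g : T -> R) (x : T),
     Ck_fun k A f -> Ck_fun k A g -> f x = 0 -> g x = 0 ->
     exists h : T -> R, [/\ Ck_fun k A h, h x = 0,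
       (exists2 v : T -> R, Ck_fun k A v &
          forall y, f y ^+ (4 * k + 4)%N = h y * v y) &
       (exists2 w : T -> R, Ck_fun k A w &
          forall y, g y ^+ (4 * k + 4)%N = h y * w y)]) /\
  (forall (f g : T -> R[i]) (x : T),
     Ck_funC k A f -> Ck_funC k A g -> f x = 0 -> g x = 0 ->
     exists h : T -> R[i], [/\ Ck_funC k A h, h x = 0,
       (exists2 v : T -> R[i], Ck_funC k A v &
          forall y, f y ^+ (4 * k + 4)%N = h y * v y) &
       (exists2 w : T -> R[i], Ck_funC k A w &
          forall y, g y ^+ (4 * k + 4)%N = h y * w y)]).
Proof.
move=> _ _ [chartsA _ _]; have kN : (k.+2 < 4 * k + 4)%N by lia.
split=> f g x; first exact: (real_common_divisor chartsA kN).
exact: (complex_common_divisor chartsA kN).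
Qed.
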